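(* Assume $\mathcal E=\emptyset$, $K$ has nonempty interior, and all $f_i$ ($i=1,\ldots,m$) and $-c_j$ ($j\in\mathcal I$) are SOS-convex polynomials. Let $d$ be the maximum degree of the $f_i$ and $d_0=\max\{\lceil d/2\rceil,\ \lceil\deg(c_j)/2\rceil\ (j\in\mathcal I)\}$. Then the interior of $\mathcal U$ equals $$\mathcal V_1=\Big\{(v_1,\ldots,v_m):\ \exists\, y\in\mathbb R^{\mathbb N^n_{2d_0}} \text{ with } y_0=1,\ M_{d_0}[y]\succeq 0,\ \langle c_j,y\rangle\ge0\ (j\in\mathcal I),\ v_i>\langle f_i,y\rangle\ (i\in[m])\Big\}.$$ Moreover, a vector $v\in f(K)$ is a weakly Pareto value if and only if it lies on the boundary of the closure of $\mathcal V_1$.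
   Context: $f_1,\ldots,f_m,c_j$ ($j\in\mathcal I$) are real polynomials in $x\in\mathbb R^n$, $K=\{x: c_j(x)\ge0\ (j\in\mathcal I)\}$, $\mathcal U=f(K)+\mathbb R^m_+$ where $f=(f_1,\ldots,f_m)$. A point $x^*\in K$ is weakly Pareto if no $x\in K$ has $f_i(x)<f_i(x^* )$ for all $i$; a weakly Pareto value is $f(x^* )$ for such $x^*$. A polynomial $p$ is SOS-convex if its Hessian satisfies $\nabla^2p(x)=Q(x)^TQ(x)$ for some matrix polynomial $Q$. For $y=(y_\alpha)_{\alpha\in\mathbb N^n_{2k}}$ (with $\mathbb N^n_{t}=\{\alpha\in\mathbb N^n:|\alpha|\le t\}$) and polynomial $p=\sum p_\alpha x^\alpha$ of degree $\le 2k$, $\langle p,y\rangle=\sum_\alpha p_\alpha y_\alpha$; $y_0$ is the entry at $\alpha=0$; the moment matrix $M_k[y]$ is the symmetric matrix indexed by $\alpha,\beta\in\mathbb N^n_k$ with $(\alpha,\beta)$ entry $y_{\alpha+\beta}$. $[m]=\{1,\ldots,m\}$. *)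

From HB Require Import structures.
From mathcomp Require Import all_boot all_order all_algebra.
From mathcomp Require Import reals.
From mathcomp Require Import mpoly.
Set Implicit Arguments. Unset Strict Implicit. Unset Printing Implicit Defensive.
Import Order.TTheory GRing.Theory Num.Theory.
Local Open Scope ring_scope.

Section Defs.
Variable R : realType.

Definition box {I : finType} (v : I -> R) (e : R) : (I -> R) -> Prop :=
  fun w => forall i, `|w i - v i| < e.

Definition interiorR {I : finType} (S : (I -> R) -> Prop) : (I -> R) -> Prop :=
  fun v => exists2 e : R, 0 < e & forall w, box v e w -> S w.

Definition closureR {I : finType} (S : (I -> R) -> Prop) : (I -> R) -> Prop :=
  fun v => forall e : R, 0 < e -> exists w, box v e w /\ S w.

Definition boundaryR {I : finType} (S : (I -> R) -> Prop) : (I -> R) -> Prop :=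
  fun v => closureR S v /\ ~ interiorR S v.

Variable n : nat.

(* total degree (deg 0 = 0) *)
Definition pdeg (p : {mpoly R[n]}) : nat := (msize p).-1.

Definition hessian (p : {mpoly R[n]}) : 'M[{mpoly R[n]}]_n :=
  \matrix_(i, j) mderiv i (mderiv j p).

Definition sos_convex (p : {mpoly R[n]}) : Prop :=
  exists (r : nat) (Q : 'M[{mpoly R[n]}]_(r, n)), hessian p = Q^T *m Q.

Definition mvec (k : nat) := 'X_{1..n < (2 * k).+1} -> R.

(* <p, y> = sum_alpha p_alpha y_alpha  (for deg p <= 2k) *)
Definition mpair (k : nat) (p : {mpoly R[n]}) (y : mvec k) : R :=
  \sum_(a : 'X_{1..n < (2 * k).+1}) p@_(a : 'X_{1..n}) * y a.

Definition mzero (k : nat) (y : mvec k) : R := y bm0.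

(* alpha + beta, for |alpha|, |beta| <= k, as an index of N^n_{2k} *)
Definition madd_idx (k : nat) (a b : 'X_{1..n < k.+1}) : 'X_{1..n < (2 * k).+1} :=
  insubd bm0 ((a : 'X_{1..n}) + (b : 'X_{1..n}))%MM.

Definition moment_matrix (k : nat) (y : mvec k) :
  'M[R]_#|{: 'X_{1..n < k.+1}}| :=
  \matrix_(i, j) y (madd_idx (enum_val i) (enum_val j)).

Definition psd (N : nat) (M : 'M[R]_N) : Prop :=
  forall u : 'cV[R]_N, 0 <= (u^T *m M *m u) 0 0.

End Defs.

Section Problem.
Variables (R : realType) (n m p : nat).
Variables (f : 'I_m -> {mpoly R[n]}) (c : 'I_p -> {mpoly R[n]}).

Definition fval (x : 'I_n -> R) : 'I_m -> R := fun i => (f i).@[x].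

Definition Kset : ('I_n -> R) -> Prop := fun x => forall j, 0 <= (c j).@[x].

Definition Uset : ('I_m -> R) -> Prop :=
  fun v => exists2 x, Kset x & forall i, fval x i <= v i.

Definition weakly_pareto (xs : 'I_n -> R) : Prop :=
  Kset xs /\ ~ (exists2 x, Kset x & forall i, fval x i < fval xs i).

Definition weakly_pareto_value (v : 'I_m -> R) : Prop :=
  exists2 xs, weakly_pareto xs & fval xs = v.

Definition dmax : nat := \max_(i < m) pdeg (f i).

Definition d0 : nat := maxn (uphalf dmax) (\max_(j < p) uphalf (pdeg (c j))).

Definition V1 : ('I_m -> R) -> Prop :=
  fun v => exists y : mvec R n d0,
    [/\ mzero y = 1, psd (moment_matrix y),
        forall j, 0 <= mpair (c j) y
      & forall i, mpair (f i) y < v i].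

End Problem.

From HB Require Import structures.
From mathcomp Require Import all_boot all_order all_algebra.
From mathcomp Require Import reals.
From mathcomp Require Import mpoly.
From mathcomp Require Import polyrcf.
From mathcomp Require Import zify ring lra.
Import Order.TTheory GRing.Theory Num.Theory.
Local Open Scope ring_scope.
Set Implicit Arguments. Unset Strict Implicit. Unset Printing Implicit Defensive.

(* The heart of the argument is a Jensen inequality for pseudo-moments: if
   y is a truncated moment vector with y_0 = 1 and M_k[y] psd, L_y is the
   Riesz functional p |-> <p, y>, and g is SOS-convex of degree <= 2k, then
   g(L_y(X_1), ..., L_y(X_n)) <= L_y(g).  To prove it we restrict g to the
   segment from xb := L_y(X) to the generic point X, obtaining a polynomial
   in t with polynomial coefficients, and apply L_y to the coefficients:
   the real polynomial phi satisfies phi(0) = g(xb), phi(1) = L_y(g),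
   phi'(0) = 0 since L_y(X_i - xb_i) = 0, and phi''(t) = L_y(sum_l a_l^2)
   >= 0 by SOS-convexity (Hessian = Q^T Q) and positivity of M_k[y]; the
   mean value theorem then yields phi(0) <= phi(1).

   By Jensen, V1 is the set of values strictly dominating some f(x), x in K
   (the converse inclusion uses point-evaluation moment vectors).  That set
   is open, so it is both the interior of U and the interior of the closure
   of V1, and every f(x), x in K, adheres to it; the characterisation of
   weakly Pareto values follows. *)

Section RieszFunctional.
Variables (R : realType) (n k : nat) (y : mvec R n k).
Local Notation L p := (mpair p y).

Lemma mpairD p q : L (p + q) = L p + L q.
Proof. by rewrite /mpair -big_split; apply: eq_bigr => a _; rewrite mcoeffD mulrDl. Qed.

Lemma mpairZ a p : L (a *: p) = a * L p.
Proof. by rewrite /mpair mulr_sumr; apply: eq_bigr => b _; rewrite mcoeffZ mulrA. Qed.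

Lemma mpair0 : L 0 = 0.
Proof. by rewrite /mpair big1 // => a _; rewrite mcoeff0 mul0r. Qed.

Lemma mpairN p : L (- p) = - L p.
Proof. by rewrite -scaleN1r mpairZ mulN1r. Qed.

Lemma mpairB p q : L (p - q) = L p - L q.
Proof. by rewrite mpairD mpairN. Qed.

Lemma mpairMn p j : L (p *+ j) = L p *+ j.
Proof. by elim: j => [|j ih]; rewrite ?mulr0n ?mpair0 // !mulrS mpairD ih. Qed.

Lemma mpair_sum I (r : seq I) (P : pred I) (F : I -> {mpoly R[n]}) :
  L (\sum_(i <- r | P i) F i) = \sum_(i <- r | P i) L (F i).
Proof. by elim/big_rec2: _ => [|i x q _ <-]; rewrite ?mpair0 ?mpairD. Qed.

Lemma mpairX (mu : 'X_{1..n}) (h : (mdeg mu < (2 * k).+1)%N) :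
  L 'X_[mu] = y (BMultinom h).
Proof.
rewrite /mpair (bigD1 (BMultinom h)) //= mcoeffX eqxx mul1r big1 ?addr0 //.
move=> a /eqP ne; rewrite mcoeffX; case: eqP => [e|_]; last by rewrite mul0r.
by exfalso; apply: ne; apply/val_inj; rewrite /= e.
Qed.

Lemma mpairC a : L a%:MP = a * mzero y.
Proof. by rewrite -[a%:MP]mulr1 mul_mpolyC -mpolyX0 mpairZ (mpairX (bm0_proof _ _)). Qed.

End RieszFunctional.

Section Positivity.
Variable R : realType.

Lemma psd_quad N (M : 'M[R]_N) (u : 'I_N -> R) : psd M ->
  0 <= \sum_i \sum_j u i * u j * M i j.
Proof.
move=> /(_ (\col_i u i)); rewrite !mxE; congr (0 <= _).
rewrite exchange_big; apply: eq_bigr => j _; rewrite mxE big_distrl /=.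
by apply: eq_bigr => i _; rewrite !mxE mulrAC.
Qed.

(* Rank-one matrices w w^T are psd; these are the moment matrices of points. *)
Lemma psd_rank1 N (M : 'M[R]_N) (w : 'I_N -> R) :
  (forall i j, M i j = w i * w j) -> psd M.
Proof.
move=> hM u; rewrite !mxE.
have -> : \sum_j (u^T *m M) 0 j * u j 0 =
          (\sum_i u i 0 * w i) * (\sum_i u i 0 * w i).
  rewrite big_distrr /=; apply: eq_bigr => j _; rewrite !mxE.
  by rewrite !big_distrl /=; apply: eq_bigr => i _; rewrite !mxE hM; ring.
nra.
Qed.

Variables (n k : nat) (y : mvec R n k).
Local Notation L p := (mpair p y).

Lemma mpair_sq (a : {mpoly R[n]}) : (msize a <= k.+1)%N ->
  L (a * a) = \sum_(i : 'X_{1..n < k.+1}) \sum_(j : 'X_{1..n < k.+1})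
                 a@_i * a@_j * y (madd_idx i j).
Proof.
move=> ha; rewrite (mpolywME (k := k.+1)) // mpair_sum [RHS]pair_bigA /=.
apply: eq_bigr => [[i j]] _ /=.
have h : (mdeg (i + j)%MM < (2 * k).+1)%N.
  rewrite mdegD; have := bmdeg i; have := bmdeg j; rewrite !ltnS; lia.
rewrite mpairZ (mpairX y h); congr (_ * y _); apply/val_inj.
by rewrite /madd_idx /= insubdK.
Qed.

Lemma mpair_sq_ge0 (a : {mpoly R[n]}) : psd (moment_matrix y) ->
  (msize a <= k.+1)%N -> 0 <= L (a * a).
Proof.
move=> hpsd ha; rewrite mpair_sq //.
have := psd_quad (fun i => a@_(enum_val i : 'X_{1..n < k.+1})) hpsd.
have ev_bij : {on predT, bijective (fun i : 'I_#|{: 'X_{1..n < k.+1}}| => enum_val i)}.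
  by apply: onW_bij; apply: enum_val_bij.
congr (0 <= _); rewrite (reindex _ ev_bij) /=; apply: eq_bigr => i _.
by rewrite (reindex _ ev_bij) /=; apply: eq_bigr => j _; rewrite mxE.
Qed.

End Positivity.

Section DegreeBounds.
Variables (R : realType) (n : nat).
Implicit Types (p q : {mpoly R[n]}).

(* Degree bookkeeping (msize p = deg p + 1 for p != 0). *)
Lemma msize_mul_le p q a b : (msize p <= a.+1)%N -> (msize q <= b.+1)%N ->
  (msize (p * q) <= (a + b).+1)%N.
Proof.
have [->|pn] := eqVneq p 0; first by rewrite mul0r msize0.
have [->|qn] := eqVneq q 0; first by rewrite mulr0 msize0.
rewrite (msizeM pn qn); have := msize_poly_eq0 p; have := msize_poly_eq0 q.
rewrite (negbTE pn) (negbTE qn) => /eqP h1 /eqP h2.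
move: (msize p) (msize q) h1 h2 => x z; lia.
Qed.

Lemma msize_sum_le (I : Type) (r : seq I) (P : pred I) (F : I -> {mpoly R[n]}) d :
  (forall i, P i -> (msize (F i) <= d)%N) -> (msize (\sum_(i <- r | P i) F i) <= d)%N.
Proof.
move=> h; apply: (big_ind (fun x => (msize x <= d)%N)) => //; first by rewrite msize0.
by move=> x z hx hz; apply: leq_trans (msizeD_le _ _) _; rewrite geq_max hx hz.
Qed.

Lemma msize_exp_le p a j : (msize p <= a.+1)%N -> (msize (p ^+ j) <= (a * j).+1)%N.
Proof.
move=> hp; elim: j => [|j ih]; first by rewrite expr0 msize1.
by rewrite exprS mulnS; apply: msize_mul_le.
Qed.

Lemma msize_prod_le (F : 'I_n -> {mpoly R[n]}) (d : 'I_n -> nat) :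
  (forall i, (msize (F i) <= (d i).+1)%N) ->
  (msize (\prod_i F i) <= (\sum_i d i).+1)%N.
Proof.
move=> h; apply: (big_ind2 (fun x (e : nat) => (msize x <= e.+1)%N)) => //.
- by rewrite msize1.
- by move=> x1 x2 e1 e2; apply: msize_mul_le.
Qed.

Lemma msize_mderiv i p : (msize (mderiv i p) <= (msize p).-1)%N.
Proof.
set d := mderiv i p; have [->|dn] := eqVneq d 0; first by rewrite msize0.
rewrite -(mlead_deg dn).
have : (mlead d + U_(i))%MM \in msupp p.
  move: (mlead_supp dn); rewrite !mcoeff_msupp /d mcoeff_mderiv.
  by apply: contraNneq => ->; rewrite mul0rn.
by move/msize_mdeg_lt; rewrite mdegD mdeg1 addn1 => h; rewrite -ltnS (ltn_predK h).
Qed.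

Lemma msizeC_le2 (a : R) : (msize (a%:MP : {mpoly R[n]}) <= 2)%N.
Proof. by rewrite msizeC; case: (_ != 0). Qed.

Lemma msize_XsubC (i : 'I_n) (a : R) : (msize ('X_i - a%:MP) <= 2)%N.
Proof.
by apply: leq_trans (msizeD_le _ _) _; rewrite geq_max msizeN msizeX mdeg1 msizeC_le2.
Qed.

Lemma msize_affine (i : 'I_n) (a b : R) : (msize (a%:MP + b%:MP * ('X_i - a%:MP)) <= 2)%N.
Proof.
apply: leq_trans (msizeD_le _ _) _; rewrite geq_max msizeC_le2 /=.
by rewrite mul_mpolyC; apply: leq_trans (msizeZ_le _ _) _; apply: msize_XsubC.
Qed.

Lemma msize_lead_le p (M : 'X_{1..n}) d :
  (mlead p <= M)%O -> (mdeg M <= d)%N -> (msize p <= d.+1)%N.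
Proof.
move=> hle hM; have [->|nz] := eqVneq p 0; first by rewrite msize0.
by rewrite -mlead_deg // ltnS; apply: leq_trans hM; apply: lemc_mdeg.
Qed.

(* Over the reals the leading terms of squares cannot cancel: if a sum of
   squares has degree <= 2d, every summand has degree <= d. *)
Lemma msize_sos_summand (r : nat) (F : 'I_r -> {mpoly R[n]}) d :
  (msize (\sum_i F i * F i) <= (2 * d).+1)%N -> forall i, (msize (F i) <= d.+1)%N.
Proof.
move=> hs i0.
case: (@arg_maxP _ _ _ i0 predT (fun j => mlead (F j)) isT) => j0 _ Hmax.
have [F0|Fnz] := eqVneq (F j0) 0.
  apply: (msize_lead_le (M := 0%MM)); last by rewrite mdeg0.
  by have := Hmax i0 isT; rewrite F0 mlead0.
set M := mlead (F j0).
have top_coef : (\sum_i F i * F i)@_(M + M)%MM = \sum_i (F i)@_M * (F i)@_M.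
  rewrite raddf_sum /=; apply: eq_bigr => j _.
  by apply: mleadcMW; apply: Hmax.
have top_pos : 0 < \sum_i (F i)@_M * (F i)@_M.
  rewrite (bigD1 j0) //=.
  have h1 : 0 < (F j0)@_M * (F j0)@_M.
    have hn : (F j0)@_M != 0 by rewrite /M mleadc_eq0.
    rewrite lt_def mulf_neq0 //=; nra.
  have h2 : 0 <= \sum_(i | i != j0) (F i)@_M * (F i)@_M.
    by apply: sumr_ge0 => i _; nra.
  lra.
have hsupp : (M + M)%MM \in msupp (\sum_i F i * F i).
  by rewrite mcoeff_msupp top_coef lt0r_neq0.
have := leq_trans (msize_mdeg_lt hsupp) hs; rewrite mdegD ltnS => hMd.
by apply: (msize_lead_le (M := M)); [apply: Hmax | lia].
Qed.

End DegreeBounds.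

(* Restriction of a polynomial to the segment from a point xb to the generic
   point X: p |-> p(xb + T (X - xb)), a polynomial in T over R[X]. *)
Definition dX (R : realType) (n : nat) (xb : 'I_n -> R) (i : 'I_n) : {mpoly R[n]} :=
  'X_i - (xb i)%:MP.

Definition segment_var (R : realType) (n : nat) (xb : 'I_n -> R) (i : 'I_n) :
  {poly {mpoly R[n]}} := ((xb i)%:MP)%:P + 'X * (dX xb i)%:P.

Definition constP (R : realType) (n : nat) : {rmorphism R -> {poly {mpoly R[n]}}} :=
  polyC \o (@mpolyC n R).

HB.lock Definition restrict (R : realType) (n : nat) (xb : 'I_n -> R)
  (p : {mpoly R[n]}) : {poly {mpoly R[n]}} := mmap (constP R n) (segment_var xb) p.

Section ChainRule.
Variables (R : realType) (n : nat) (xb : 'I_n -> R).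
Local Notation Phi := (restrict xb).

Lemma restrictD p q : Phi (p + q) = Phi p + Phi q. Proof. by rewrite unlock mmapD. Qed.
Lemma restrictM p q : Phi (p * q) = Phi p * Phi q. Proof. by rewrite unlock rmorphM. Qed.
Lemma restrictC a : Phi a%:MP = (a%:MP)%:P. Proof. by rewrite unlock mmapC. Qed.
Lemma restrictX i : Phi 'X_i = segment_var xb i. Proof. by rewrite unlock mmapX mmap1U. Qed.
Lemma restrict0 : Phi 0 = 0. Proof. by rewrite unlock mmap0. Qed.
Lemma restrict1 : Phi 1 = 1. Proof. by rewrite unlock rmorph1. Qed.

Definition chain_rule_at (p : {mpoly R[n]}) :=
  (Phi p)^`() = \sum_i Phi (mderiv i p) * (dX xb i)%:P.

(* The polynomials satisfying the chain rule contain the constants and the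
   variables and are closed under sums and products, hence are all of R[X]. *)
Lemma chain_rule_atD p q : chain_rule_at p -> chain_rule_at q -> chain_rule_at (p + q).
Proof.
rewrite /chain_rule_at => hp hq; rewrite restrictD derivD hp hq -big_split /=.
by apply: eq_bigr => i _; rewrite mderivD restrictD mulrDl.
Qed.

Lemma chain_rule_atM p q : chain_rule_at p -> chain_rule_at q -> chain_rule_at (p * q).
Proof.
rewrite /chain_rule_at => hp hq.
rewrite restrictM derivM hp hq big_distrl big_distrr -big_split /=.
by apply: eq_bigr => i _; rewrite mderivM restrictD !restrictM mulrDl mulrAC mulrA.
Qed.

Lemma chain_rule_atC a : chain_rule_at a%:MP.
Proof.
by rewrite /chain_rule_at restrictC derivC big1 // => i _; rewrite mderivC restrict0 mul0r.
Qed.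

Lemma chain_rule_atX j : chain_rule_at 'X_j.
Proof.
rewrite /chain_rule_at restrictX /segment_var derivD derivC add0r derivM derivX.
rewrite derivC mulr0 addr0 mul1r (bigD1 j) //= big1 ?addr0.
  rewrite mderivX mnm1E eqxx scale1r.
  have -> : (U_(j) - U_(j))%MM = 0%MM by apply/mnmP => l; rewrite mnmBE mnm0E subnn.
  by rewrite mpolyX0 restrict1 mul1r.
by move=> i ne; rewrite mderivX mnm1E eq_sym (negbTE ne) scale0r restrict0 mul0r.
Qed.

Lemma restrict_deriv p : (Phi p)^`() = \sum_i Phi (mderiv i p) * (dX xb i)%:P.
Proof.
have chain_monomial (mu : 'X_{1..n}) : chain_rule_at 'X_[mu].
  rewrite mpolyXE_id; apply: big_ind; [exact: (chain_rule_atC 1) | exact: chain_rule_atM |].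
  move=> i _; elim: (mu i) => [|j ih]; first by rewrite expr0; apply: (chain_rule_atC 1).
  by rewrite exprS; apply: chain_rule_atM => //; apply: chain_rule_atX.
suff : chain_rule_at p by [].
rewrite [p]mpolyE; apply: big_ind => //.
- by have := chain_rule_atC 0; rewrite /chain_rule_at !restrict0.
- exact: chain_rule_atD.
- by move=> mu _; rewrite -mul_mpolyC; apply: chain_rule_atM; [apply: chain_rule_atC|].
Qed.

Lemma restrict_deriv2 p : (Phi p)^`()^`() =
  \sum_i \sum_j Phi (mderiv j (mderiv i p)) * (dX xb j)%:P * (dX xb i)%:P.
Proof.
rewrite restrict_deriv raddf_sum /=; apply: eq_bigr => i _.
by rewrite derivM derivC mulr0 addr0 restrict_deriv big_distrl.
Qed.

End ChainRule.

Lemma mmap_ext (n : nat) (R S : nzRingType) (f1 f2 : R -> S) (h1 h2 : 'I_n -> S) p :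
  f1 =1 f2 -> h1 =1 h2 -> mmap f1 h1 p = mmap f2 h2 p.
Proof.
move=> ef eh; rewrite /mmap; apply: eq_bigr => mu _; rewrite ef; congr (_ * _).
exact: mmap1_eq.
Qed.

Lemma rmorph_mmap (n : nat) (R : nzRingType) (S1 S2 : comNzRingType)
  (rho : {rmorphism S1 -> S2}) (f : R -> S1) (h : 'I_n -> S1) p :
  rho (mmap f h p) = mmap (rho \o f) (rho \o h) p.
Proof.
rewrite /mmap rmorph_sum; apply: eq_bigr => mu _; rewrite rmorphM /=; congr (_ * _).
by rewrite /mmap1 rmorph_prod; apply: eq_bigr => i _; rewrite rmorphXn.
Qed.

Section SegmentEvaluation.
Variables (R : realType) (n : nat) (xb : 'I_n -> R).

Definition segment_at (t : R) (i : 'I_n) : {mpoly R[n]} :=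
  (xb i)%:MP + t%:MP * ('X_i - (xb i)%:MP).

Definition along (t : R) (p : {mpoly R[n]}) : {mpoly R[n]} :=
  mmap (@mpolyC n R) (segment_at t) p.

Lemma restrict_horner t p : (restrict xb p).[t%:MP] = along t p.
Proof.
rewrite unlock -horner_evalE (rmorph_mmap (horner_eval (t%:MP))).
by apply: mmap_ext => [a|i] /=; rewrite horner_evalE ?hornerC // !hornerE.
Qed.

Lemma restrict_at1 p : (restrict xb p).[1%:MP] = p.
Proof.
rewrite restrict_horner -[RHS]comp_mpoly_id /comp_mpoly; apply: mmap_ext => // i.
by rewrite tnth_mktuple /segment_at mul1r addrC subrK.
Qed.

Lemma restrict_at0 p : (restrict xb p).[0%:MP] = (p.@[xb])%:MP.
Proof.
rewrite restrict_horner /along /meval (rmorph_mmap (@mpolyC n R)).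
by apply: mmap_ext => [a|i] //=; rewrite /segment_at mul0r addr0.
Qed.

Lemma msize_along t p : (msize (along t p) <= msize p)%N.
Proof.
rewrite /along (mmapE (msize p)) //; apply: msize_sum_le => mu _.
rewrite mul_mpolyC; apply: leq_trans (msizeZ_le _ _) _.
apply: leq_trans (bmdeg mu); rewrite mdegE /mmap1.
apply: (msize_prod_le (d := fun i => mu i)) => i.
by have := msize_exp_le (mu i) (msize_affine i (xb i) t); rewrite mul1n.
Qed.

Lemma msize_restrict_deriv2 t p :
  (msize ((restrict xb p)^`()^`().[t%:MP]) <= msize p)%N.
Proof.
rewrite restrict_deriv2 horner_sum; apply: msize_sum_le => i _.
rewrite horner_sum; apply: msize_sum_le => j _.
rewrite !hornerM !hornerC restrict_horner.
have hdX l : (msize (dX xb l) <= 2)%N by apply: msize_XsubC.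
have hE := msize_along t (mderiv j (mderiv i p)).
have hm1 := msize_mderiv i p; have hm2 := msize_mderiv j (mderiv i p).
set e := along t _ in hE *.
have [->|en] := eqVneq e 0; first by rewrite !mul0r msize0.
have es : msize e = (msize e).-1.+1 by rewrite prednK // lt0n msize_poly_eq0.
have hej : (msize (e * dX xb j) <= ((msize e).-1 + 1).+1)%N.
  by apply: msize_mul_le (hdX j); rewrite -es.
apply: leq_trans (msize_mul_le hej (hdX i)) _.
move: es hE hm1 hm2; move: (msize e) (msize p) (msize (mderiv i p))
  (msize (mderiv j (mderiv i p))) => x1 x2 x3 x4; rewrite -!subn1; lia.
Qed.

Lemma restrict_deriv2_sos g r (Q : 'M[{mpoly R[n]}]_(r, n)) t :
  hessian g = Q^T *m Q ->
  (restrict xb g)^`()^`().[t%:MP] =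
    \sum_l (\sum_i along t (Q l i) * dX xb i) * (\sum_i along t (Q l i) * dX xb i).
Proof.
move=> hQ; rewrite restrict_deriv2 horner_sum.
transitivity (\sum_i \sum_j \sum_l
    along t (Q l j) * along t (Q l i) * dX xb j * dX xb i).
  apply: eq_bigr => i _; rewrite horner_sum; apply: eq_bigr => j _.
  rewrite !hornerM !hornerC restrict_horner.
  have -> : mderiv j (mderiv i g) = hessian g j i by rewrite /hessian mxE.
  rewrite hQ !mxE /along rmorph_sum /= !big_distrl /=; apply: eq_bigr => l _.
  by rewrite rmorphM !mxE.
rewrite exchange_big /=; under eq_bigr do rewrite exchange_big /=.
rewrite exchange_big /=; apply: eq_bigr => l _.
rewrite big_distrl /=; apply: eq_bigr => j _.
rewrite big_distrr /=; apply: eq_bigr => i _.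
by rewrite !mulrA; congr (_ * _); rewrite mulrAC.
Qed.

End SegmentEvaluation.

Section RieszOnCoefficients.
Variables (R : realType) (n k : nat) (y : mvec R n k).
Local Notation L p := (mpair p y).

Definition mpair_poly (P : {poly {mpoly R[n]}}) : {poly R} :=
  \poly_(i < size P) L (P`_i).

Lemma coef_mpair_poly P i : (mpair_poly P)`_i = L (P`_i).
Proof. by rewrite coef_poly; case: ltnP => h //; rewrite nth_default // mpair0. Qed.

Lemma mpair_poly_deriv P : (mpair_poly P)^`() = mpair_poly (P^`()).
Proof.
by apply/polyP => i; rewrite coef_deriv !coef_mpair_poly coef_deriv mpairMn.
Qed.

Lemma mpair_poly_horner P t : (mpair_poly P).[t] = L (P.[t%:MP]).
Proof.
rewrite (horner_coef_wide _ (size_poly _ _)) horner_coef mpair_sum.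
apply: eq_bigr => i _; rewrite coef_mpair_poly -rmorphXn /=.
by rewrite [_ * (t ^+ i)%:MP]mulrC mul_mpolyC mpairZ mulrC.
Qed.

End RieszOnCoefficients.

Lemma convex_poly_01 (R : realType) (phi : {poly R}) :
  phi^`().[0] = 0 -> (forall t, 0 <= phi^`()^`().[t]) -> phi.[0] <= phi.[1].
Proof.
move=> h0 h2.
have [c hc e1] := poly_mvt phi (@ltr01 R).
have c0 : 0 < c by move: hc; rewrite in_itv /= => /andP[].
have [c' _ e2] := poly_mvt phi^`() c0.
have : 0 <= phi^`().[c] by have := h2 c'; rewrite h0 in e2; nra.
by move: e1; rewrite subr0 mulr1 => e1; lra.
Qed.

Lemma jensen (R : realType) (n k : nat) (y : mvec R n k) (g : {mpoly R[n]}) :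
  mzero y = 1 -> psd (moment_matrix y) -> (msize g <= (2 * k).+1)%N ->
  sos_convex g -> g.@[fun i => mpair 'X_i y] <= mpair g y.
Proof.
move=> y0 hpsd hg [r [Q hQ]].
set xb := fun i => mpair 'X_i y.
pose phi := mpair_poly y (restrict xb g).
have phi1 : phi.[1] = mpair g y by rewrite mpair_poly_horner restrict_at1.
have phi0 : phi.[0] = g.@[xb].
  by rewrite mpair_poly_horner restrict_at0 mpairC y0 mulr1.
have centered i : mpair (dX xb i) y = 0 by rewrite mpairB mpairC y0 mulr1 subrr.
have phi'0 : phi^`().[0] = 0.
  rewrite mpair_poly_deriv mpair_poly_horner restrict_deriv horner_sum mpair_sum.
  rewrite big1 // => i _.
  by rewrite hornerM hornerC restrict_at0 mul_mpolyC mpairZ centered mulr0.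
have phi''_ge0 t : 0 <= phi^`()^`().[t].
  rewrite !mpair_poly_deriv mpair_poly_horner.
  have hdeg := leq_trans (msize_restrict_deriv2 xb t g) hg.
  rewrite (restrict_deriv2_sos _ _ hQ) in hdeg *.
  rewrite mpair_sum; apply: sumr_ge0 => l _; apply: mpair_sq_ge0 => //.
  exact: (msize_sos_summand hdeg l).
by rewrite -phi0 -phi1; apply: convex_poly_01.
Qed.

Section Relaxation.
Variables (R : realType) (n m p : nat).
Variables (f : 'I_m -> {mpoly R[n]}) (c : 'I_p -> {mpoly R[n]}).

Definition dominated (v : 'I_m -> R) : Prop :=
  exists2 x, Kset c x & forall i, fval f x i < v i.

Lemma msize_f i : (msize (f i) <= (2 * d0 f c).+1)%N.
Proof.
have h1 : (pdeg (f i) <= dmax f)%N := @leq_bigmax _ (fun i => pdeg (f i)) i.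
have h2 : (uphalf (dmax f) <= d0 f c)%N by rewrite leq_maxl.
move: h1 h2; rewrite /pdeg; move: (msize (f i)) (dmax f) (d0 f c) => a b d; lia.
Qed.

Lemma msize_c j : (msize (c j) <= (2 * d0 f c).+1)%N.
Proof.
have h1 : (uphalf (pdeg (c j)) <= \max_(j < p) uphalf (pdeg (c j)))%N.
  exact: (@leq_bigmax _ (fun j => uphalf (pdeg (c j))) j).
have h2 : (\max_(j < p) uphalf (pdeg (c j)) <= d0 f c)%N by rewrite leq_maxr.
move: h1 h2; rewrite /pdeg.
by move: (msize (c j)) (\max_(j < p) uphalf (pdeg (c j))) (d0 f c) => a b d; lia.
Qed.

(* By Jensen, the first moments of a feasible y form a point of K whose
   f-values are dominated by v. *)
Lemma V1_dominated v : (forall i, sos_convex (f i)) ->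
  (forall j, sos_convex (- c j)) -> V1 f c v -> dominated v.
Proof.
move=> hf hc [y [y0 hpsd hcy hfy]].
exists (fun i => mpair 'X_i y).
  move=> j; have := jensen y0 hpsd _ (hc j).
  rewrite msizeN mevalN mpairN => /(_ (msize_c j)) h.
  by have := hcy j; lra.
by move=> i; apply: le_lt_trans (jensen y0 hpsd (msize_f i) (hf i)) (hfy i).
Qed.

(* Conversely, the moments of a point x in K are feasible for V1. *)
Lemma dominated_V1 v : dominated v -> V1 f c v.
Proof.
move=> [x hK hfx].
pose y : mvec R n (d0 f c) := fun a => ('X_[a : 'X_{1..n}]).@[x].
have pair_eval q : (msize q <= (2 * d0 f c).+1)%N -> mpair q y = q.@[x].
  move=> hq; rewrite [in RHS](mpolywE hq) raddf_sum /=; apply: eq_bigr => a _.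
  by rewrite mevalZ.
exists y; split.
- by rewrite /mzero /y /= mpolyX0 meval1.
- pose w (i : 'I_#|{: 'X_{1..n < (d0 f c).+1}}|) := ('X_[enum_val i : 'X_{1..n}]).@[x].
  apply: (psd_rank1 (w := w)) => i j; rewrite mxE /y /madd_idx insubdK ?mpolyXD ?mevalM //.
  rewrite -topredE /= mdegD; have := bmdeg (enum_val i); have := bmdeg (enum_val j).
  by move: (mdeg _) (mdeg _) => a b; lia.
- by move=> j; rewrite pair_eval ?msize_c //; apply: hK.
- by move=> i; rewrite pair_eval ?msize_f //; apply: hfx.
Qed.

Lemma box_translate (v : 'I_m -> R) (e d : R) :
  `|d| < e -> box v e (fun i => v i + d).
Proof. by move=> hd i; rewrite addrC addKr. Qed.

Lemma dominated_open v : dominated v ->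
  exists2 e : R, 0 < e & forall w, box v e w -> dominated w.
Proof.
move=> [x hK hfx].
exists (\big[Order.min/(1:R)]_i (v i - fval f x i)).
  by apply: lt_bigmin => // i _; rewrite subr_gt0.
move=> w hw; exists x => // i.
have h1 := bigmin_le (1:R) i (fun i => v i - fval f x i).
have := hw i; rewrite ltr_norml => /andP[h2 _].
by move: h1 h2; set e := \big[_/_]_i _; lra.
Qed.

Lemma interior_U v : interiorR (Uset f c) v <-> dominated v.
Proof.
split.
- move=> [e e0 H].
  have [x hK hx] : Uset f c (fun i => v i - e / 2).
    by apply: H; apply: box_translate; rewrite normrN ger0_norm; lra.
  by exists x => // i; have := hx i; lra.
- move=> /dominated_open [e e0 H]; exists e => // w /H [x hK hx].
  by exists x => // i; apply/ltW.
Qed.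

Lemma interior_closure_V1 (hf : forall i, sos_convex (f i))
    (hc : forall j, sos_convex (- c j)) v :
  interiorR (closureR (V1 f c)) v <-> dominated v.
Proof.
split.
- move=> [e e0 H].
  have hcl : closureR (V1 f c) (fun i => v i - e / 2).
    by apply: H; apply: box_translate; rewrite normrN ger0_norm; lra.
  have [|w [hb hV]] := hcl (e / 2); first lra.
  have [x hK hx] := V1_dominated hf hc hV.
  exists x => // i; have := hx i; have := hb i.
  by rewrite ltr_norml => /andP[_ h2]; lra.
- move=> /dominated_open [e e0 H]; exists e => // w /H hw e' e'0.
  by exists w; split; [move=> i; rewrite subrr normr0 | apply: dominated_V1].
Qed.

Lemma image_in_closure v x0 : Kset c x0 -> fval f x0 = v ->
  closureR (closureR (V1 f c)) v.
Proof.
move=> hK hv e e0; exists (fun i => v i + e / 2).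
split; first by apply: box_translate; rewrite ger0_norm; lra.
move=> e' e'0; exists (fun i => v i + e / 2); split.
  by move=> i; rewrite subrr normr0.
by apply: dominated_V1; exists x0 => // i; rewrite hv; lra.
Qed.

End Relaxation.

Unset Implicit Arguments.
Theorem theorem3p3 (R : realType) (n m p : nat)
    (f : 'I_m -> {mpoly R[n]}) (c : 'I_p -> {mpoly R[n]}) :
  (exists xK, interiorR (Kset c) xK) ->
  (forall i, sos_convex (f i)) ->
  (forall j, sos_convex (- c j)) ->
  (forall v, interiorR (Uset f c) v <-> V1 f c v) /\
  (forall v, (exists2 x, Kset c x & fval f x = v) ->
     (weakly_pareto_value f c v <-> boundaryR (closureR (V1 f c)) v)).
Proof.
move=> _ hf hc; split.
  move=> v; rewrite interior_U; split; [exact: dominated_V1 | exact: V1_dominated].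
move=> v [x0 hK0 hv]; split.
- move=> [xs [hKs not_dominated] hxs]; split; first exact: image_in_closure hK0 hv.
  move/(interior_closure_V1 hf hc) => [x hK hx]; apply: not_dominated.
  by exists x => //; rewrite hxs.
- move=> [_ not_interior]; exists x0 => //; split => // [[x hK hx]].
  apply: not_interior; apply/(interior_closure_V1 hf hc); exists x => //.
  by rewrite -hv.
Qed.
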